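(* For $A,x\in\mathbb{R}$ define $E_0(A,x):=1$, $E_1(A,x):=e^{(1-x)A}$ and, for $n\ge2$, \[ E_n(A,x):=\begin{cases} \exp\!\Big(\big[x(E_1+E_3+\cdots+E_{n-1})-\tfrac n2\big]A\Big), & n \text{ even},\\[4pt] \exp\!\Big(\big[\tfrac{n+1}{2}-x(E_0+E_2+\cdots+E_{n-1})\big]A\Big), & n\text{ odd},\end{cases} \] with all $E_j$ evaluated at $(A,x)$. Define $\varphi_1(A,x):=x-1$, $\varphi_n(A,x):=\varphi_{n-1}(A,x)-1+xE_{n-1}(A,x)$ for $n\ge2$, and the polynomial $p_n(A):=\frac{\partial\varphi_n}{\partial x}(A,1)$. Then: (i) for every $n\ge2$, the positive roots of $p_{2n}$ are separated by the positive roots of $p_{2n-1}$, and the positive roots of $p_{2n+1}$ are separated by the positive roots of $p_{2n}$ that are less than $2$; (ii) for every $n\ge1$, the even polynomials $\frac{p_{2n}(A)}{2-A}$ and $p_{2n-1}(A)$ each have exactly $n-1$ positive roots; consequently, since they are even of degree $2n-2$, they also have $n-1$ negative roots, and all their roots are real and simple.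
   Context: Given two finite sets $R_1,R_2\subset\mathbb{R}$ (here, sets of roots), ''$R_1$ is separated by $R_2$'' means: all elements of $R_2$ lie between the minimal and maximal elements of $R_1$, and between any two consecutive elements of $R_2$ there... more precisely, any interval formed by a pair of consecutive elements of $R_1$ contains exactly one element of $R_2$ (i.e. the elements of $R_1$ and $R_2$ interlace, with $R_1$ having the extreme elements). For $n\ge1$, $2-A$ divides $p_{2n}(A)$, so $\frac{p_{2n}(A)}{2-A}$ is a polynomial. *)

From HB Require Import structures.
From mathcomp Require Import all_boot all_order all_algebra.
From mathcomp Require Import all_classical all_reals all_analysis.
Set Implicit Arguments. Unset Strict Implicit. Unset Printing Implicit Defensive.
Import Order.TTheory GRing.Theory Num.Theory.
Local Open Scope classical_set_scope.
Local Open Scope ring_scope.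

Section Defs.
Variable R : realType.

(* The value E_k(A,x), given f j = E_j(A,x) for all j < k. *)
Definition Enew (A x : R) (f : nat -> R) (k : nat) : R :=
  if k == 1%N then expR ((1 - x) * A)
  else if odd k then
    expR (((k.+1)%:R / 2 - x * \sum_(j < k | ~~ odd j) f j) * A)
  else
    expR ((x * \sum_(j < k | odd j) f j - k%:R / 2) * A).

(* Ef A x n k = E_k(A,x) for all k <= n. *)
Fixpoint Ef (A x : R) (n : nat) : nat -> R :=
  match n with
  | 0 => fun _ => 1
  | m.+1 => let f := Ef A x m in
            fun k => if (k <= m)%N then f k else Enew A x f m.+1
  end.

Definition Ecoef (n : nat) (A x : R) : R := Ef A x n n.

(* phi_n(A,x), n >= 1 (phi 0 is an unused junk value) *)
Fixpoint phi (n : nat) (A x : R) : R :=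
  match n with
  | 0 => 0
  | 1 => x - 1
  | (m.+1 as k).+1 => phi k A x - 1 + x * Ecoef k A x
  end.

Definition pn (n : nat) (A : R) : R := derive1 (fun x => phi n A x) 1.

Definition roots_separated (R1 R2 : set R) : Prop :=
  exists s1 s2 : seq R,
    [/\ sorted <%R s1, sorted <%R s2,
        R1 = [set x | x \in s1] /\ R2 = [set x | x \in s2],
        size s2 = (size s1).-1 &
        (forall i, (i.+1 < size s1)%N -> s1`_i < s2`_i < s1`_i.+1)].

Definition nroots_in (q : {poly R}) (P : R -> Prop) (k : nat) : Prop :=
  exists s : seq R, [/\ uniq s, (forall x, x \in s <-> (P x /\ root q x)) & size s = k].

Definition real_simple_roots (q : {poly R}) : Prop :=
  exists s : seq R, uniq s /\ q = lead_coef q *: \prod_(r <- s) ('X - r%:P).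

Definition part_ii_props (n : nat) (q : {poly R}) : Prop :=
  [/\ (forall A, q.[- A] = q.[A]),
      size q = (2 * n - 1)%N,                      (* degree 2n-2 *)
      nroots_in q (fun A => 0 < A) n.-1,
      nroots_in q (fun A => A < 0) n.-1
    & real_simple_roots q].

End Defs.

(* By induction every E_k(A, 1) equals 1: at x = 1 the exponent defining E_k
   compares a sum of ones with the number of its terms.  Differentiating the
   definition at x = 1 then shows that e_k := dE_k/dx (A, 1) + 1 satisfies
   e_{k+1} - e_{k-1} = +-A e_k, and since p_n = e_0 + ... + e_{n-1} this gives
   p_{2m} = (2 - A) d_m and p_{2m+1} = d_{m+1} + d_m, where d_0 = 0, d_1 = 1 and
   d_{m+2} = (2 - A^2) d_{m+1} - d_m, i.e. d_m(A) = U_{m-1}(1 - A^2/2) is a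
   Chebyshev polynomial of the second kind.  With A = 2 cos t one gets
   d_m(2 cos t) = +-sin(2mt)/sin(2t) and (d_{m+1} + d_m)(2 cos t) =
   +-cos((2m+1)t)/cos t, whence the positive roots 2 cos(j pi/2m), 0 < j < m,
   and 2 cos((2j+1) pi/(2(2m+1))), j < m.  These visibly interlace, and as the
   polynomials are even of degree at most twice the number of positive roots
   found, these roots and their negatives are all the roots, and are simple. *)

From mathcomp Require Import all_boot all_order all_algebra.
From mathcomp Require Import all_classical all_reals all_analysis.
From mathcomp Require Import ring lra zify.
Set Implicit Arguments. Unset Strict Implicit. Unset Printing Implicit Defensive.
Import Order.TTheory GRing.Theory Num.Theory.
Local Open Scope classical_set_scope.
Local Open Scope ring_scope.

Lemma big_ord_recr_cond (V : nmodType) (P : pred nat) (F : nat -> V) k :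
  \sum_(j < k.+1 | P j) F j = \sum_(j < k | P j) F j + (if P k then F k else 0).
Proof. by rewrite big_mkcond big_ord_recr /= -big_mkcond. Qed.

Lemma sum_odd_double (V : nmodType) (F : nat -> V) m :
  \sum_(j < m.*2.+2 | odd j) F j = \sum_(j < m.*2 | odd j) F j + F m.*2.+1.
Proof. by rewrite !(big_ord_recr_cond odd) /= odd_double addr0. Qed.

Lemma sum_even_doubleS (V : nmodType) (F : nat -> V) m :
  \sum_(j < m.*2.+3 | ~~ odd j) F j = \sum_(j < m.*2.+1 | ~~ odd j) F j + F m.*2.+2.
Proof. by rewrite 2!(big_ord_recr_cond (fun j => ~~ odd j)) /= odd_double addr0. Qed.

Lemma sum_odd_ones (S : pzSemiRingType) m :
  \sum_(j < m.*2 | odd j) 1 = m%:R :> S.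
Proof.
elim: m => [|m IH]; first by rewrite big_ord0.
by rewrite doubleS (sum_odd_double (fun=> 1)) IH natr1.
Qed.

Lemma sum_even_ones (S : pzSemiRingType) m :
  \sum_(j < m.*2.+1 | ~~ odd j) 1 = m.+1%:R :> S.
Proof.
elim: m => [|m IH]; first by rewrite big_mkcond big_ord1.
by rewrite doubleS (sum_even_doubleS (fun=> 1)) IH natr1.
Qed.

Lemma sorted_mkseq (T : Type) (r : rel T) (f : nat -> T) k :
  (forall i, (i.+1 < k)%N -> r (f i) (f i.+1)) -> sorted r (mkseq f k).
Proof.
case: k => // k f_incr; apply/(sortedP (f 0%N)) => i; rewrite size_mkseq => ik.
by rewrite !nth_mkseq ?f_incr // ltnW.
Qed.

Lemma mem_mkseqP (T : eqType) (f : nat -> T) k x :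
  reflect (exists2 i, (i < k)%N & x = f i) (x \in mkseq f k).
Proof.
apply: (iffP mapP) => [[i]|[i ik ->]]; last by exists i; rewrite ?mem_iota.
by rewrite mem_iota => /andP[_ ik] ->; exists i.
Qed.

Lemma natr_double_half (F : numFieldType) k : k.*2%:R / 2 = k%:R :> F.
Proof. by rewrite -muln2 natrM mulfK // pnatr_eq0. Qed.

Lemma nat_ind2 (P : nat -> Prop) :
  P 0%N -> P 1%N -> (forall m, P m -> P m.+1 -> P m.+2) -> forall m, P m.
Proof.
move=> P0 P1 PS m; suff : P m /\ P m.+1 by case.
by elim: m => [|m [Pm PSm]]; split => //; exact: PS.
Qed.

Section ChebyshevRoots.
Variable R : realType.
Implicit Types (A x : R) (k m n : nat).

Fixpoint dcheb (m : nat) : {poly R} :=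
  match m with
  | 0 => 0
  | 1 => 1
  | (k.+1 as m').+1 => (2%:P - 'X^2) * dcheb m' - dcheb k
  end.

Lemma dchebSS m : dcheb m.+2 = (2%:P - 'X^2) * dcheb m.+1 - dcheb m.
Proof. by []. Qed.

Definition dsum (m : nat) : {poly R} := dcheb m.+1 + dcheb m.

Lemma dsumSS m : dsum m.+2 = (2%:P - 'X^2) * dsum m.+1 - dsum m.
Proof. by rewrite /dsum (dchebSS m.+1) dchebSS; ring. Qed.

Definition ppoly (n : nat) : {poly R} :=
  if odd n then dsum n./2 else (2%:P - 'X) * dcheb n./2.

Lemma ppoly_double m : ppoly m.*2 = (2%:P - 'X) * dcheb m.
Proof. by rewrite /ppoly odd_double doubleK. Qed.

Lemma ppoly_doubleS m : ppoly m.*2.+1 = dsum m.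
Proof. by rewrite /ppoly /= odd_double /= uphalf_double. Qed.

(* The e_k of the header. *)
Definition pincr (k : nat) : {poly R} := ppoly k.+1 - ppoly k.

Lemma pincr0 : pincr 0 = 1.
Proof. by rewrite /pincr (ppoly_doubleS 0) (ppoly_double 0) /dsum /=; ring. Qed.

Lemma pincr1 : pincr 1 = 1 - 'X.
Proof. by rewrite /pincr (ppoly_double 1) (ppoly_doubleS 0) /dsum /=; ring. Qed.

Lemma pincr_double m : 'X * pincr m.*2.+1 = pincr m.*2.+2 - pincr m.*2.
Proof.
rewrite /pincr -!doubleS !ppoly_double !ppoly_doubleS /dsum dchebSS; ring.
Qed.

Lemma pincr_doubleS m : - 'X * pincr m.*2.+2 = pincr m.*2.+3 - pincr m.*2.+1.
Proof.
rewrite /pincr -!doubleS !ppoly_double !ppoly_doubleS /dsum !dchebSS; ring.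
Qed.

Lemma dcheb_even m A : (dcheb m).[- A] = (dcheb m).[A].
Proof.
elim/nat_ind2: m => [||m IH0 IH1]; [by rewrite !hornerE.. |].
by rewrite dchebSS !hornerE IH0 IH1 sqrrN.
Qed.

Lemma dcheb_at0 m : (dcheb m).[0] = m%:R.
Proof.
elim/nat_ind2: m => [||m IH0 IH1]; [by rewrite !hornerE.. |].
by rewrite dchebSS !hornerE IH0 IH1 -!natr1; ring.
Qed.

Lemma size_dcheb m : (size (dcheb m) <= (m.*2).-1)%N.
Proof.
elim/nat_ind2: m => [||m IH0 IH1]; [by rewrite ?size_poly0 ?size_poly1.. |].
have size_quad : (size (2%:P - 'X^2 : {poly R})%R <= 3)%N.
  rewrite (leq_trans (size_polyD _ _)) // size_polyN size_polyXn geq_max andbT.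
  exact: leq_trans (size_polyC_leq1 _) _.
rewrite dchebSS (leq_trans (size_polyD _ _)) // size_polyN geq_max.
apply/andP; split; last by rewrite (leq_trans IH0) // !doubleS; lia.
by rewrite (leq_trans (size_polyMleq _ _)) //; move: size_quad IH1; rewrite !doubleS; lia.
Qed.

Lemma sum_odd_pincr m A :
  A * \sum_(j < m.*2 | odd j) (pincr j).[A] = (pincr m.*2).[A] - 1.
Proof.
elim: m => [|m IH]; first by rewrite big_ord0 pincr0 hornerC; ring.
rewrite doubleS (sum_odd_double (fun j => (pincr j).[A])) mulrDr IH.
have := congr1 (horner^~ A) (pincr_double m); rewrite !hornerE => ->; ring.
Qed.

Lemma sum_even_pincr m A :
  - A * \sum_(j < m.*2.+1 | ~~ odd j) (pincr j).[A] = (pincr m.*2.+1).[A] - 1.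
Proof.
elim: m => [|m IH].
  by rewrite big_mkcond big_ord1 pincr0 pincr1 !hornerE; ring.
rewrite doubleS (sum_even_doubleS (fun j => (pincr j).[A])) mulrDr IH.
have := congr1 (horner^~ A) (pincr_doubleS m); rewrite !hornerE => ->; ring.
Qed.

Lemma Ef_Ecoef A x n k : (k <= n)%N -> Ef A x n k = Ecoef k A x.
Proof.
elim: n k => [|n IH] k; first by rewrite leqn0 => /eqP ->.
rewrite leq_eqVlt => /orP[/eqP -> //|]; rewrite ltnS => kn /=; rewrite kn; exact: IH.
Qed.

Lemma Enew_ext A x (f g : nat -> R) k :
  (forall j, (j < k)%N -> f j = g j) -> Enew A x f k = Enew A x g k.
Proof.
move=> fg; have sum_fg (P : pred nat) : \sum_(j < k | P j) f j = \sum_(j < k | P j) g j.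
  by apply: eq_bigr => j _; exact: fg.
by rewrite /Enew (sum_fg odd) (sum_fg (fun j => ~~ odd j)).
Qed.

Lemma EcoefS A x k : Ecoef k.+1 A x = Enew A x (fun j => Ecoef j A x) k.+1.
Proof. by rewrite /Ecoef /= ltnn; apply: Enew_ext => j; rewrite ltnS => /Ef_Ecoef. Qed.

Lemma Ecoef_double A x m : Ecoef m.+1.*2 A x =
  expR ((x * \sum_(j < m.+1.*2 | odd j) Ecoef j A x - m.+1%:R) * A).
Proof.
rewrite doubleS EcoefS /Enew /= odd_double /= -[in (_ / 2)]doubleS.
by rewrite natr_double_half.
Qed.

Lemma Ecoef_doubleS A x m : Ecoef m.*2.+1 A x =
  expR ((m.+1%:R - x * \sum_(j < m.*2.+1 | ~~ odd j) Ecoef j A x) * A).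
Proof.
case: m => [|m]; first by rewrite EcoefS /Enew /= big_mkcond big_ord1 mulr1.
by rewrite EcoefS /Enew /= odd_double /= -!doubleS natr_double_half.
Qed.

Lemma is_derive_sum_cond (V W : normedModType R) (P : pred nat) (h : nat -> V -> W)
    (dh : nat -> W) k (x v : V) :
  (forall j, (j < k)%N -> P j -> is_derive x v (h j) (dh j)) ->
  is_derive x v (fun y => \sum_(j < k | P j) h j y) (\sum_(j < k | P j) dh j).
Proof.
move=> hd; have -> : (fun y => \sum_(j < k | P j) h j y) =
    \sum_(j < k) (fun y => if P j then h j y else 0).
  by apply/funext => y; rewrite big_mkcond fct_sumE.
rewrite [X in is_derive _ _ _ X]big_mkcond; apply: is_derive_sum => j.
by case: ifP => Pj; [exact: hd | exact: is_derive_cst].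
Qed.

Lemma is_derive_mulx_sum (P : pred nat) A k :
  (forall j, (j < k)%N ->
     Ecoef j A 1 = 1 /\ is_derive (1 : R) 1 (Ecoef j A) ((pincr j).[A] - 1)) ->
  \sum_(j < k | P j) Ecoef j A 1 = (\sum_(j < k | P j) 1) /\
  is_derive (1 : R) 1 (fun x => x * \sum_(j < k | P j) Ecoef j A x)
    (\sum_(j < k | P j) (pincr j).[A]).
Proof.
move=> IH; have S1 : \sum_(j < k | P j) Ecoef j A 1 = \sum_(j < k | P j) 1.
  by apply: eq_bigr => j _; exact: (IH j (ltn_ord j)).1.
split => //.
have dS := is_derive_sum_cond (P := P) (h := fun j => Ecoef j A)
  (fun j jk _ => (IH j jk).2).
apply: is_derive_eq; rewrite S1 scale1r /GRing.scale /= mulr1 -big_split.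
by apply: eq_bigr => j _; exact: subrK.
Qed.

Lemma is_derive_expR_mulr (g : R -> R) (dg A : R) :
  g 1 = 0 -> is_derive (1 : R) 1 g dg ->
  is_derive (1 : R) 1 (fun x => expR (g x * A)) (dg * A).
Proof.
move=> g1 dg_g; apply: is_derive_eq.
rewrite g1 mul0r expR0 mul1r scaler0 add0r; exact: mulrC.
Qed.

Lemma Ecoef_is_derive k A :
  Ecoef k A 1 = 1 /\ is_derive (1 : R) 1 (Ecoef k A) ((pincr k).[A] - 1).
Proof.
elim/ltn_ind: k => k IH.
have [m [km|km]] : exists m, k = m.*2 \/ k = m.*2.+1.
  by exists k./2; rewrite -{1 3}(odd_double_half k); case: (odd k); [right|left].
all: subst k.
- case: m IH => [|m] IH.
    by split => //; rewrite double0 pincr0 hornerC subrr; exact: is_derive_cst.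
  have [S1 dS] := is_derive_mulx_sum odd IH.
  pose g x := x * \sum_(j < m.+1.*2 | odd j) Ecoef j A x - m.+1%:R.
  have g1 : g 1 = 0 by rewrite /g mul1r S1 sum_odd_ones subrr.
  have -> : Ecoef m.+1.*2 A = fun x => expR (g x * A).
    by apply/funext => x; exact: Ecoef_double.
  split; first by rewrite g1 mul0r expR0.
  have dg : is_derive (1 : R) 1 g (\sum_(j < m.+1.*2 | odd j) (pincr j).[A]).
    by apply: is_derive_eq; rewrite subr0.
  apply: is_derive_eq (is_derive_expR_mulr A g1 dg) _.
  by rewrite mulrC sum_odd_pincr.
- have [S1 dS] := is_derive_mulx_sum (fun j => ~~ odd j) IH.
  pose g x := m.+1%:R - x * \sum_(j < m.*2.+1 | ~~ odd j) Ecoef j A x.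
  have g1 : g 1 = 0 by rewrite /g mul1r S1 sum_even_ones subrr.
  have -> : Ecoef m.*2.+1 A = fun x => expR (g x * A).
    by apply/funext => x; exact: Ecoef_doubleS.
  split; first by rewrite g1 mul0r expR0.
  have dg : is_derive (1 : R) 1 g (- \sum_(j < m.*2.+1 | ~~ odd j) (pincr j).[A]).
    by apply: is_derive_eq; rewrite add0r mul1r.
  apply: is_derive_eq (is_derive_expR_mulr A g1 dg) _.
  by rewrite mulrC mulrN -mulNr sum_even_pincr.
Qed.

Lemma phi_is_derive n A : is_derive (1 : R) 1 (phi n.+1 A) (ppoly n.+1).[A].
Proof.
elim: n => [|n IH].
  have -> : phi 1 A = fun x => x - 1 by [].
  by apply: is_derive_eq; rewrite (ppoly_doubleS 0) !hornerE subr0.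
have -> : phi n.+2 A = fun x => phi n.+1 A x - 1 + x * Ecoef n.+1 A x by [].
have [E1 dE] := Ecoef_is_derive n.+1 A.
apply: is_derive_eq.
by rewrite E1 subr0 !scale1r /pincr hornerD hornerN; ring.
Qed.

Lemma pn_ppoly n A : pn n.+1 A = (ppoly n.+1).[A].
Proof. by rewrite /pn derive1E; apply: derive_val; exact: phi_is_derive. Qed.

Lemma pn_double n A : (0 < n)%N -> pn (2 * n) A = (2 - A) * (dcheb n).[A].
Proof.
case: n => // n _; rewrite mul2n pn_ppoly -doubleS ppoly_double.
by rewrite hornerM hornerD hornerN hornerC hornerX.
Qed.

Lemma pn_doubleS m A : pn m.*2.+1 A = (dsum m).[A].
Proof. by rewrite pn_ppoly ppoly_doubleS. Qed.

Lemma even_poly_roots n (q : {poly R}) (s : seq R) :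
  (forall A, q.[- A] = q.[A]) -> q != 0 -> (size q <= (2 * n - 1))%N ->
  uniq s -> size s = n.-1 -> (forall x, x \in s -> 0 < x /\ root q x) ->
  part_ii_props n q /\ (forall x, x \in s <-> 0 < x /\ root q x).
Proof.
move=> q_even q0 size_q s_uniq size_s s_roots.
have rootN x : root q (- x) = root q x by rewrite /root q_even.
have s_pos x : x \in s -> 0 < x by move=> /s_roots[].
pose t := s ++ map -%R s.
have mem_t x : (x \in t) = (x \in s) || (- x \in s).
  by rewrite mem_cat -[x in x \in map _ _]opprK (mem_map oppr_inj).
have t_uniq : uniq t.
  rewrite cat_uniq s_uniq (map_inj_uniq oppr_inj) s_uniq andbT /=.
  apply/hasPn => _ /mapP[y ys ->]; apply/negP => /s_pos.
  by have := s_pos y ys; rewrite oppr_gt0 => /ltW /le_gtF ->.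
have t_roots : all (root q) t.
  by apply/allP => x; rewrite mem_t => /orP[/s_roots[]|/s_roots[_]]; rewrite ?rootN.
have size_t : size t = (n.-1 + n.-1)%N by rewrite size_cat size_map size_s.
have := max_poly_roots q0 t_roots t_uniq; rewrite size_t => lt_q.
have {lt_q}size_qt : size q = (size t).+1.
  apply/eqP; rewrite size_t eqn_leq lt_q andbT (leq_trans size_q) //.
  by case: (n) => //= k; lia.
have t_uniq_roots : uniq_roots t by rewrite uniq_rootsE.
have q_prod := all_roots_prod_XsubC size_qt t_roots t_uniq_roots.
have root_q x : root q x = (x \in t).
  by rewrite q_prod rootZ ?root_prod_XsubC // lead_coef_eq0.
have pos_roots x : x \in s <-> 0 < x /\ root q x.
  split=> [/s_roots //|[x0]]; rewrite root_q mem_t => /orP[//|/s_pos].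
  by rewrite oppr_gt0 => /lt_trans/(_ x0); rewrite ltxx.
split=> //; split=> //.
- by rewrite size_qt size_t; move: size_qt size_q; case: (n) => [|k] /=; lia.
- by exists s.
- exists (map -%R s); split; rewrite ?size_map ?(map_inj_uniq oppr_inj) // => x.
  rewrite -[x in x \in map _ _]opprK (mem_map oppr_inj).
  by rewrite pos_roots rootN oppr_gt0.
- by exists t; rewrite q_prod lead_coefZ lead_coef_prod_XsubC mulr1.
Qed.

Lemma roots_separated_mkseq (f g : nat -> R) k :
  (forall i, (i < k)%N -> f i < g i < f i.+1) ->
  roots_separated [set x | x \in mkseq f k.+1] [set x | x \in mkseq g k].
Proof.
move=> fg; exists (mkseq f k.+1), (mkseq g k); split; rewrite ?size_mkseq //.
- apply: sorted_mkseq => i ik; have /andP[fgi gfi] := fg i ik.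
  exact: lt_trans fgi gfi.
- apply: sorted_mkseq => i ik; have /andP[_ gfi] := fg i (ltnW ik).
  have /andP[fgi _] := fg i.+1 ik; exact: lt_trans gfi fgi.
- by move=> i ik; rewrite !nth_mkseq ?fg // ltnW.
Qed.

Definition pifrac (a b : nat) : R := a%:R / b%:R * pi.

Lemma pifrac0 b : pifrac 0 b = 0.
Proof. by rewrite /pifrac !mul0r. Qed.

Lemma pifrac_ge0 a b : 0 <= pifrac a b.
Proof. by rewrite /pifrac mulr_ge0 ?pi_ge0 // divr_ge0. Qed.

Lemma pifrac_le_pi a b : (a <= b)%N -> (0 < b)%N -> pifrac a b <= pi.
Proof.
move=> ab b0; rewrite /pifrac -[leRHS]mul1r ler_wpM2r ?pi_ge0 //.
by rewrite ler_pdivrMr ?ltr0n // mul1r ler_nat.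
Qed.

Lemma pifrac_lt a b c d : (0 < b)%N -> (0 < d)%N -> (a * d < c * b)%N ->
  pifrac a b < pifrac c d.
Proof.
move=> b0 d0 h; rewrite /pifrac ltr_pM2r ?pi_gt0 // ltr_pdivrMr ?ltr0n //.
by rewrite mulrAC ltr_pdivlMr ?ltr0n // -!natrM ltr_nat.
Qed.

Lemma pifrac_lt_pi a b : (a < b)%N -> pifrac a b < pi.
Proof.
move=> ab; have -> : pi = pifrac 1 1 by rewrite /pifrac divr1 mul1r.
by apply: pifrac_lt => //; lia.
Qed.

Lemma cos_pifrac_lt a b c d : (a <= b)%N -> (c <= d)%N -> (c * b < a * d)%N ->
  cos (pifrac a b) < cos (pifrac c d).
Proof.
move=> ab cd h; have b0 : (0 < b)%N by nia.
have d0 : (0 < d)%N by nia.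
by rewrite ltr_cos ?in_itv /= ?pifrac_ge0 ?pifrac_le_pi //; exact: pifrac_lt.
Qed.

Lemma cos_pifrac_lt1 a b : (0 < a <= b)%N -> cos (pifrac a b) < 1.
Proof. by move=> ab; rewrite -cos0 -(pifrac0 1) cos_pifrac_lt //; lia. Qed.

Lemma cos_pifrac_gt0 a b : (a.*2 < b)%N -> 0 < cos (pifrac a b).
Proof.
move=> ab; apply: cos_gt0_pihalf.
have lt_pihalf : pifrac a b < pi / 2.
  have -> : pi / 2 = pifrac 1 2 by rewrite /pifrac mul1r mulrC.
  by apply: pifrac_lt => //; lia.
by have := pifrac_ge0 a b; have := pi_gt0 R; lra.
Qed.

Lemma sinDB_sum y p : sin (y + p) + sin (y - p) = 2 * cos p * sin y :> R.
Proof. by rewrite sinD sinB; ring. Qed.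

Lemma cosDB_sum y p : cos (y + p) + cos (y - p) = 2 * cos p * cos y :> R.
Proof. by rewrite cosD cosB; ring. Qed.

Lemma sin_mulrn_pi j : sin (pi *+ j) = 0 :> R.
Proof. by have := alternatingn (@sinDpi R) j 0; rewrite add0r sin0 mulr0. Qed.

Lemma cos_pihalfD_mulrn_pi k : cos (pi / 2 + pi *+ k) = 0 :> R.
Proof. by have := alternatingn (@cosDpi R) k (pi / 2); rewrite cos_pihalf mulr0. Qed.

Lemma trig_recurrence (f : R -> R) (phi y0 K : R) (u : nat -> R) :
  (forall y, f (y + phi) + f (y - phi) = 2 * cos phi * f y) ->
  (forall m, u m.+2 = - (2 * cos phi) * u m.+1 - u m) ->
  u 0%N * K = f y0 -> u 1%N * K = - f (y0 + phi) ->
  forall m, u m * K = (-1) ^+ m * f (y0 + phi *+ m).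
Proof.
move=> f_rec u_rec u0 u1; elim/nat_ind2 => [||m IH0 IH1].
- by rewrite u0 mulr0n addr0 mul1r.
- by rewrite u1 mulr1n mulN1r.
have := f_rec (y0 + phi *+ m.+1).
have -> : y0 + phi *+ m.+1 - phi = y0 + phi *+ m by rewrite mulrSr addrA addrK.
rewrite -addrA -mulrSr => /(canRL (addrK _)) ->.
by rewrite u_rec mulrBl -[_ * u m.+1 * K]mulrA IH1 IH0 !exprS; ring.
Qed.

Lemma horner_quad_cos t :
  (2%:P - 'X^2 : {poly R}).[2 * cos t] = - (2 * cos (t *+ 2)).
Proof. by rewrite !hornerE cos_mulr2n; ring. Qed.

Lemma dcheb_sin t m :
  (dcheb m).[2 * cos t] * - sin (t *+ 2) = (-1) ^+ m * sin (t *+ 2 *+ m).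
Proof.
rewrite -[t *+ 2 *+ m]add0r.
apply: (trig_recurrence (sinDB_sum ^~ (t *+ 2)) (u := fun m => (dcheb m).[2 * cos t])).
- by move=> k; rewrite dchebSS hornerD hornerN hornerM horner_quad_cos.
- by rewrite hornerE mul0r sin0.
- by rewrite hornerE mul1r add0r.
Qed.

Lemma dsum_cos t m :
  (dsum m).[2 * cos t] * cos t = (-1) ^+ m * cos (t + t *+ 2 *+ m).
Proof.
apply: (trig_recurrence (cosDB_sum ^~ (t *+ 2)) (u := fun m => (dsum m).[2 * cos t])).
- by move=> k; rewrite dsumSS hornerD hornerN hornerM horner_quad_cos.
- by rewrite /dsum !hornerE.
- rewrite /dsum dchebSS !hornerE cosD cos_mulr2n sin_mulr2n.
  have -> : cos t * sin t *+ 2 * sin t = sin t ^+ 2 * cos t *+ 2 by ring.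
  by rewrite sin2cos2; ring.
Qed.

Lemma root_dcheb_cos n j : (0 < j < n)%N -> root (dcheb n) (2 * cos (pifrac j n.*2)).
Proof.
move=> /andP[j0 jn]; set t := pifrac j n.*2.
have n0 : n%:R != 0 :> R by rewrite pnatr_eq0 -lt0n; lia.
have t2 : t *+ 2 = pifrac j n by rewrite /t /pifrac -mulr_natr -muln2 natrM; field.
have t2n : t *+ 2 *+ n = pi *+ j.
  by rewrite t2 /pifrac -mulr_natr -[pi *+ j]mulr_natr; field.
have sin_t2 : 0 < sin (t *+ 2).
  rewrite t2 sin_gt0_pi // -(pifrac0 n) pifrac_lt_pi // andbT.
  by apply: pifrac_lt => //; nia.
have := dcheb_sin t n; rewrite t2n sin_mulrn_pi mulr0 => /eqP.
by rewrite mulf_eq0 oppr_eq0 (gt_eqF sin_t2) orbF.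
Qed.

Lemma root_dsum_cos m k : (k < m)%N ->
  root (dsum m) (2 * cos (pifrac k.*2.+1 (m.*2.+1).*2)).
Proof.
move=> km; set t := pifrac _ _.
have t2m : t + t *+ 2 *+ m = pi / 2 + pi *+ k.
  rewrite -mulrnA mul2n -mulrS /t /pifrac -mulr_natr -[pi *+ k]mulr_natr.
  rewrite -!muln2 !natrM -!natr1 natrM; field.
  by rewrite -natrM natr1 pnatr_eq0.
have cos_t : 0 < cos t by apply: cos_pifrac_gt0; lia.
have := dsum_cos t m; rewrite t2m cos_pihalfD_mulrn_pi mulr0 => /eqP.
by rewrite mulf_eq0 (gt_eqF cos_t) orbF.
Qed.

(* Both lists of roots are indexed to increase with [i]; the last one,
   [dcheb_root n n.-1 = 2], is the root of the factor [2 - A] of p_{2n}. *)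
Definition dcheb_root n i : R := 2 * cos (pifrac (n.-1 - i) n.*2).
Definition dsum_root m i : R := 2 * cos (pifrac (m.-1 - i).*2.+1 (m.*2.+1).*2).

Lemma dcheb_root_gt0 n i : (i < n)%N -> 0 < dcheb_root n i.
Proof. by move=> ni; rewrite mulr_gt0 // cos_pifrac_gt0 //; lia. Qed.

Lemma dcheb_root_lt2 n i : (i < n.-1)%N -> dcheb_root n i < 2.
Proof. by move=> ni; rewrite -[ltRHS]mulr1 ltr_pM2l // cos_pifrac_lt1 //; lia. Qed.

Lemma dcheb_root_last n : dcheb_root n n.-1 = 2.
Proof. by rewrite /dcheb_root subnn pifrac0 cos0 mulr1. Qed.

Lemma root_dcheb_root n i : (i < n.-1)%N -> root (dcheb n) (dcheb_root n i).
Proof. by move=> ni; apply: root_dcheb_cos; lia. Qed.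

Lemma dsum_root_gt0 m i : (i < m)%N -> 0 < dsum_root m i.
Proof. by move=> mi; rewrite mulr_gt0 // cos_pifrac_gt0 //; lia. Qed.

Lemma root_dsum_root m i : (i < m)%N -> root (dsum m) (dsum_root m i).
Proof. by move=> mi; apply: root_dsum_cos; lia. Qed.

Lemma dcheb_dsum_root_interlace m i : (i < m)%N ->
  dcheb_root m.+1 i < dsum_root m i < dcheb_root m.+1 i.+1.
Proof. by move=> mi; rewrite !ltr_pM2l // !cos_pifrac_lt //; nia. Qed.

Lemma dsum_dcheb_root_interlace m i : (i < m)%N ->
  dsum_root m.+1 i < dcheb_root m.+1 i < dsum_root m.+1 i.+1.
Proof. by move=> mi; rewrite !ltr_pM2l // !cos_pifrac_lt //; nia. Qed.

Lemma dcheb_roots n : (0 < n)%N -> part_ii_props n (dcheb n) /\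
  (forall x, x \in mkseq (dcheb_root n) n.-1 <-> 0 < x /\ root (dcheb n) x).
Proof.
move=> n0; apply: even_poly_roots; rewrite ?size_mkseq //.
- exact: dcheb_even.
- have : (dcheb n).[0] != 0 by rewrite dcheb_at0 pnatr_eq0 -lt0n.
  by apply: contraNneq => ->; rewrite horner0.
- by rewrite mul2n subn1 size_dcheb.
- apply/lt_sorted_uniq/sorted_mkseq => i ni.
  by rewrite ltr_pM2l // cos_pifrac_lt //; nia.
- move=> _ /mem_mkseqP[i ni ->].
  by rewrite dcheb_root_gt0 ?root_dcheb_root //; lia.
Qed.

Lemma dsum_roots m : part_ii_props m.+1 (dsum m) /\
  (forall x, x \in mkseq (dsum_root m) m <-> 0 < x /\ root (dsum m) x).
Proof.
apply: even_poly_roots; rewrite ?size_mkseq //.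
- by move=> A; rewrite /dsum !hornerD !dcheb_even.
- have : (dsum m).[0] != 0 by rewrite /dsum hornerD !dcheb_at0 -natrD pnatr_eq0 addSn.
  by apply: contraNneq => ->; rewrite horner0.
- rewrite (leq_trans (size_polyD _ _)) // geq_max.
  by rewrite !(leq_trans (size_dcheb _)) //; lia.
- apply/lt_sorted_uniq/sorted_mkseq => i mi.
  by rewrite ltr_pM2l // cos_pifrac_lt //; nia.
- by move=> _ /mem_mkseqP[i mi ->]; rewrite dsum_root_gt0 ?root_dsum_root.
Qed.

Lemma pos_roots_pn_double n : (0 < n)%N ->
  [set A : R | 0 < A /\ pn (2 * n) A = 0] = [set x | x \in mkseq (dcheb_root n) n].
Proof.
move=> n0; have [_ droots] := dcheb_roots n0.
have -> : mkseq (dcheb_root n) n = rcons (mkseq (dcheb_root n) n.-1) 2.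
  by rewrite -(dcheb_root_last n) -mkseqS prednK.
apply/seteqP; split=> x /=; rewrite mem_rcons inE.
- case=> x0; rewrite pn_double // => /eqP; rewrite mulf_eq0 subr_eq0 eq_sym.
  by case/orP=> [-> //|dx]; apply/orP; right; apply/droots.
- case/orP=> [/eqP ->|/droots[x0 dx]]; first by rewrite pn_double // subrr mul0r.
  by split=> //; rewrite pn_double // (eqP dx) mulr0.
Qed.

Lemma pos_roots_lt2_pn_double n : (0 < n)%N ->
  [set A : R | 0 < A /\ A < 2 /\ pn (2 * n) A = 0] =
  [set x | x \in mkseq (dcheb_root n) n.-1].
Proof.
move=> n0; have [_ droots] := dcheb_roots n0.
apply/seteqP; split=> x /=.
- case=> x0 [x2]; rewrite pn_double // => /eqP; rewrite mulf_eq0 subr_eq0.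
  by rewrite eq_sym (lt_eqF x2) => dx; apply/droots.
- move=> xs; have [x0 dx] := (droots x).1 xs; split=> //; split.
    by case/mem_mkseqP: xs => i ni ->; exact: dcheb_root_lt2.
  by rewrite pn_double // (eqP dx) mulr0.
Qed.

Lemma pos_roots_pn_doubleS m :
  [set A : R | 0 < A /\ pn m.*2.+1 A = 0] = [set x | x \in mkseq (dsum_root m) m].
Proof.
have [_ sroots] := dsum_roots m.
apply/seteqP; split=> x /=; rewrite pn_doubleS.
- by case=> x0 /eqP dx; apply/sroots.
- by case/sroots=> x0 /eqP.
Qed.

End ChebyshevRoots.

Theorem theorem5p2 (R : realType) :
  (forall n : nat, (2 <= n)%N ->
     roots_separated [set A : R | 0 < A /\ pn (2 * n) A = 0]
               [set A : R | 0 < A /\ pn (2 * n - 1) A = 0]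
  /\ roots_separated [set A : R | 0 < A /\ pn (2 * n + 1) A = 0]
               [set A : R | 0 < A /\ A < 2 /\ pn (2 * n) A = 0])
  /\
  (forall n : nat, (1 <= n)%N ->
     exists q1 q2 : {poly R},
       [/\ (forall A : R, pn (2 * n) A = (2 - A) * q1.[A]),
           (forall A : R, pn (2 * n - 1) A = q2.[A]),
           part_ii_props n q1 & part_ii_props n q2]).
Proof.
have odd_index m : (2 * m.+1 - 1 = m.*2.+1)%N by lia.
split=> -[//|m] n_ge; rewrite odd_index.
- split.
  + rewrite pos_roots_pn_double // pos_roots_pn_doubleS.
    by apply: roots_separated_mkseq; exact: dcheb_dsum_root_interlace.
  + rewrite pos_roots_lt2_pn_double // addn1 mul2n pos_roots_pn_doubleS.
    by apply: roots_separated_mkseq; exact: dsum_dcheb_root_interlace.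
- exists (dcheb R m.+1), (dsum R m); split.
  + by move=> A; exact: pn_double.
  + by move=> A; exact: pn_doubleS.
  + exact: (dcheb_roots _ n_ge).1.
  + exact: (dsum_roots R m).1.
Qed.
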